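(* There exists a fragile graph with minimum degree $4$, and there exists a fragile graph with chromatic number $4$.
   Context: All graphs are finite and simple. A graph is $k$-connected if it has at least $k+1$ vertices and no vertex cutset with at most $k-1$ vertices. A graph is fragile if it has no $3$-connected subgraph. *)

From mathcomp Require Import all_boot.
Set Implicit Arguments. Unset Strict Implicit. Unset Printing Implicit Defensive.

Definition simple_graph (T : finType) (e : rel T) : Prop :=
  irreflexive e /\ symmetric e.

Definition subgraph (T : finType) (e : rel T) (S : {set T}) (f : rel T) : Prop :=
  simple_graph f /\
  (forall x y, f x y -> [&& x \in S, y \in S & e x y]).

Definition del_rel (T : finType) (S C : {set T}) (f : rel T) : rel T :=
  [rel x y | [&& f x y, x \in S :\: C & y \in S :\: C]].

Definition is_cutset (T : finType) (S : {set T}) (f : rel T) (C : {set T}) : Prop :=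
  C \subset S /\
  exists x y, [/\ x \in S :\: C, y \in S :\: C & ~~ connect (del_rel S C f) x y].

Definition k_connected (T : finType) (k : nat) (S : {set T}) (f : rel T) : Prop :=
  k.+1 <= #|S| /\ forall C : {set T}, #|C| <= k.-1 -> ~ is_cutset S f C.

Definition fragile (T : finType) (e : rel T) : Prop :=
  ~ exists (S : {set T}) (f : rel T), subgraph e S f /\ k_connected 3 S f.

Definition degree (T : finType) (e : rel T) (v : T) : nat := #|[set u | e v u]|.

Definition min_degree_eq (T : finType) (e : rel T) (d : nat) : Prop :=
  (forall v, d <= degree e v) /\ exists v, degree e v = d.

Definition proper_coloring (T : finType) (e : rel T) (k : nat) (c : T -> 'I_k) : Prop :=
  forall x y, e x y -> c x != c y.

Definition colorable (T : finType) (e : rel T) (k : nat) : Prop :=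
  exists c : T -> 'I_k, proper_coloring e c.

Definition chromatic_number_eq (T : finType) (e : rel T) (k : nat) : Prop :=
  colorable e k /\ forall j, j < k -> ~ colorable e j.

(* A 3-connected graph has minimum degree at least 3 and cannot be split by
   deleting at most two vertices.  Hence a 3-connected subgraph of G inside a
   vertex set Q avoids every vertex of degree at most 2 in G[Q], and if {a, b}
   separates G[Q] into a part K and the rest, it lies inside K + {a, b} or
   inside Q - K.  Recursing on these smaller sets until at most three vertices
   remain certifies fragility.  The certificate is checked by computation for
   the Moser spindle, which has chromatic number 4, and for a 4-regular graph
   on 14 vertices. *)

From mathcomp Require Import all_boot.
From mathcomp Require Import zify.

Set Implicit Arguments. Unset Strict Implicit. Unset Printing Implicit Defensive.

Section KConnected.

Variables (T : finType) (k : nat) (S : {set T}) (f : rel T).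
Hypotheses (f_irr : irreflexive f) (f_sym : symmetric f).
Hypothesis S_conn : k_connected k S f.

Lemma k_connected_split (Z : {set T}) (P : pred T) : #|Z| <= k.-1 ->
    {in S :\: Z &, forall u v, f u v -> P u = P v} ->
  {in S :\: Z, forall u, P u} \/ {in S :\: Z, forall u, ~~ P u}.
Proof.
move=> Zk P_closed.
have [/exists_inP[u uSZ nPu] | /exists_inPn all_P] :=
  boolP [exists u in S :\: Z, ~~ P u]; last by left=> u /all_P /negPn.
have [/exists_inP[w wSZ Pw] | /exists_inPn all_nP] :=
  boolP [exists w in S :\: Z, P w]; last by right.
case: S_conn => _ /(_ (S :&: Z)) [].
  exact: leq_trans (subset_leq_card (subsetIr S Z)) Zk.
have SZ : S :\: (S :&: Z) = S :\: Z by rewrite setDIr setDv set0U.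
split; first exact: subsetIl.
exists w, u; rewrite SZ; split=> //; apply: contraL nPu => wu; rewrite negbK.
have del_sym : connect_sym (del_rel S (S :&: Z) f).
  by apply: sym_connect_sym => x y; rewrite /del_rel /= f_sym (andbC (x \in _)).
have del_closed : closed (del_rel S (S :&: Z) f) P.
  by move=> x y /and3P[fxy]; rewrite SZ => xSZ ySZ; exact: P_closed.
by rewrite -[P u]/(u \in P) -(closed_connect del_closed wu).
Qed.

Lemma k_connected_degree v : v \in S -> k <= #|[set u in S | f v u]|.
Proof.
move=> vS; rewrite leqNgt; apply/negP => small.
set N := [set u in S | f v u] in small.
have vN : v \notin N by rewrite inE f_irr andbF.
have N_closed : {in S :\: N &, forall u w, f u w -> (u == v) = (w == v)}.
  move=> u w /setDP[uS uN] /setDP[wS wN] fuw.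
  apply/idP/idP => /eqP eq_v.
    by move: wN; rewrite inE wS -eq_v fuw.
  by move: uN; rewrite inE uS -eq_v f_sym fuw.
(* Otherwise the neighbourhood N would separate v from the rest of S. *)
have Nk : #|N| <= k.-1 by lia.
have [onlyv|] := k_connected_split Nk N_closed; last first.
  by move/(_ v); rewrite inE vN vS eqxx => /(_ isT).
have : S \subset v |: N.
  apply/subsetP => u uS; rewrite in_setU1.
  by have [uN|uN] := boolP (u \in N); rewrite ?orbT // onlyv // inE uN.
move/subset_leq_card; rewrite cardsU1 vN; case: S_conn; lia.
Qed.

End KConnected.

Fixpoint seq_pick (A : Type) (p : pred A) (s : seq A) : option A :=
  if s is x :: s' then if p x then Some x else seq_pick p s' else None.

Lemma seq_pickP (A : Type) (p : pred A) s x : seq_pick p s = Some x -> p x.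
Proof. by elim: s => //= y s IHs; case: ifP => [py [<-] | _ /IHs]. Qed.

Section Certificate.

Variables (T : finType) (e : rel T).

Definition separates (Q Z K : seq T) : bool :=
  all (fun u => all (fun v =>
    [&& u \notin Z, v \notin Z & e u v] ==> ((u \in K) == (v \in K))) Q) Q.

Definition bfs_step (R K : seq T) : seq T :=
  K ++ [seq v <- R | (v \notin K) && has (e^~ v) K].

(* A candidate side of the separation {a, b}; soundness only relies on the
   check [separates], not on this being a connected component. *)
Definition component (Q Z : seq T) : seq T :=
  let R := [seq u <- Q | u \notin Z] in
  if R is r :: _ then iter (size Q) (bfs_step R) [:: r] else [::].

Definition splitting_pair (Q : seq T) (ab : T * T) : bool :=
  let Z := [:: ab.1; ab.2] in let K := component Q Z in
  separates Q Z K && has (fun u => (u \notin Z) && (u \notin K)) Q.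

Fixpoint no3conn (fuel : nat) (Q : seq T) : bool :=
  if fuel is n.+1 then
    if size Q <= 3 then true else
    if seq_pick (fun v => count (e v) Q <= 2) Q is Some v then
      no3conn n [seq u <- Q | u != v]
    else if seq_pick (splitting_pair Q) [seq (a, b) | a <- Q, b <- Q] is Some (a, b) then
      let Z := [:: a; b] in let K := component Q Z in
      no3conn n (K ++ Z) && no3conn n [seq u <- Q | (u \in Z) || (u \notin K)]
    else false
  else false.

Variables (S : {set T}) (f : rel T).
Hypotheses (Sf_sub : subgraph e S f) (S_conn : k_connected 3 S f).

Lemma low_degree_notin (Q : seq T) v :
  {subset S <= Q} -> count (e v) Q <= 2 -> v \notin S.
Proof.
move=> S_Q; case: Sf_sub => -[f_irr f_sym] f_e low; apply/negP => vS.
have := k_connected_degree f_irr f_sym S_conn vS.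
suff : #|[set u in S | f v u]| <= count (e v) Q by lia.
rewrite -size_filter; apply: leq_trans (card_size _); apply: subset_leq_card.
apply/subsetP => u; rewrite inE => /andP[uS fvu].
by case/and3P: (f_e _ _ fvu) => _ _ evu; rewrite mem_filter evu S_Q.
Qed.

Lemma separates_split (Q Z K : seq T) :
    {subset S <= Q} -> size Z <= 2 -> separates Q Z K ->
  {subset S <= K ++ Z} \/ {subset S <= [seq u <- Q | (u \in Z) || (u \notin K)]}.
Proof.
move=> S_Q; case: Sf_sub => -[_ f_sym] f_e Z2 sepZK.
have Zk : #|[set:: Z]| <= 3.-1 by rewrite cardsE; apply: leq_trans (card_size Z) Z2.
have K_closed : {in S :\: [set:: Z] &, forall u v, f u v -> (u \in K) = (v \in K)}.
  move=> u v /setDP[uS uZ] /setDP[vS vZ] fuv; case/and3P: (f_e _ _ fuv) => _ _ euv.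
  move: uZ vZ; rewrite !inE => uZ vZ.
  by move/allP/(_ u (S_Q _ uS))/allP/(_ v (S_Q _ vS)): sepZK; rewrite uZ vZ euv => /eqP.
have [inK|notK] := k_connected_split f_sym S_conn Zk K_closed; [left|right].
  move=> u uS; rewrite mem_cat orbC; have [//|uZ] /= := boolP (u \in Z).
  by apply: inK; rewrite !inE uZ.
move=> u uS; rewrite mem_filter S_Q // andbT; have [//|uZ] /= := boolP (u \in Z).
by apply: notK; rewrite !inE uZ.
Qed.

Lemma no3conn_sound fuel Q : no3conn fuel Q -> ~ {subset S <= Q}.
Proof.
elim: fuel Q => //= n IHn Q.
case: ifP => [Q3 _ S_Q | _].
  have : #|S| <= size Q.
    by apply: leq_trans (card_size Q); apply/subset_leq_card/subsetP.
  by case: S_conn; lia.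
case low: seq_pick => [v|].
  move=> /IHn + S_Q; apply=> u uS; rewrite mem_filter S_Q // andbT.
  by apply: contraTneq uS => ->; apply: low_degree_notin S_Q (seq_pickP low).
case pair: seq_pick => [[a b]|] //.
have /andP[sepZK _] := seq_pickP pair.
move=> /andP[noK noR] S_Q.
by case: (separates_split S_Q _ sepZK) => // sub;
  [apply: IHn noK sub | apply: IHn noR sub].
Qed.

End Certificate.

Lemma no3conn_fragile (T : finType) (e : rel T) fuel (s : seq T) :
  (forall x, x \in s) -> no3conn e fuel s -> fragile e.
Proof.
move=> s_all cert [S [f [Sf_sub S_conn]]].
by apply: (no3conn_sound Sf_sub S_conn cert) => x _; apply: s_all.
Qed.

Lemma diamond_same_color (T : finType) (e : rel T) j (c : T -> 'I_j) x y z w :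
  j <= 3 -> proper_coloring e c ->
  e x y -> e x z -> e y z -> e w y -> e w z -> c x = c w.
Proof.
move=> j3 c_ok exy exz eyz ewy ewz; apply: ord_inj.
move: (c_ok _ _ exy) (c_ok _ _ exz) (c_ok _ _ eyz) (c_ok _ _ ewy) (c_ok _ _ ewz).
rewrite -!(inj_eq (@ord_inj j)).
move: (ltn_ord (c x)) (ltn_ord (c y)) (ltn_ord (c z)) (ltn_ord (c w)); lia.
Qed.

(* [enum 'I_n] and [ord_enum n] do not reduce under [vm_compute]: cardinals are
   locked and [insub] goes through the opaque [idP]. *)
Fixpoint ord_seq n : seq 'I_n :=
  if n is m.+1 return seq 'I_n then ord0 :: map (lift ord0) (ord_seq m) else [::].

Lemma mem_ord_seq n (i : 'I_n) : i \in ord_seq n.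
Proof.
elim: n i => [|n IHn] i; first by case: i.
rewrite inE; case: (unliftP ord0 i) => [j ->|->]; rewrite ?eqxx //.
by rewrite mem_map ?IHn ?orbT //; exact: lift_inj.
Qed.

Lemma ord_seq_uniq n : uniq (ord_seq n).
Proof.
elim: n => //= n IHn; rewrite map_inj_uniq ?IHn ?andbT; last exact: lift_inj.
by apply/mapP => -[j _ /eqP]; apply/negP; exact: neq_lift.
Qed.

Lemma all_ord_seq n (p : pred 'I_n) : all p (ord_seq n) -> forall i, p i.
Proof. by move/allP=> all_p i; apply/all_p/mem_ord_seq. Qed.

Lemma degree_ord_seq n (e : rel 'I_n) v : degree e v = count (e v) (ord_seq n).
Proof.
rewrite /degree -size_filter -(card_uniqP (filter_uniq _ (ord_seq_uniq n))).
by apply: eq_card => u; rewrite inE mem_filter mem_ord_seq andbT.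
Qed.

Definition rel_of_edges n (E : seq (nat * nat)) : rel 'I_n :=
  fun x y => ((val x, val y) \in E) || ((val y, val x) \in E).

Lemma rel_of_edges_sym n E : symmetric (@rel_of_edges n E).
Proof. by move=> x y; rewrite /rel_of_edges orbC. Qed.

Lemma rel_of_edges_simple n E :
  all (fun x => ~~ rel_of_edges E x x) (ord_seq n) -> simple_graph (@rel_of_edges n E).
Proof.
move=> /all_ord_seq loopless; split; last exact: rel_of_edges_sym.
by move=> x; apply/negbTE/loopless.
Qed.

Lemma proper_coloring_ord_seq n (e : rel 'I_n) k (c : 'I_n -> 'I_k) :
    all (fun x => all (fun y => e x y ==> (c x != c y)) (ord_seq n)) (ord_seq n) ->
  proper_coloring e c.
Proof. by move=> /all_ord_seq c_ok x y; apply/implyP/(allP (c_ok x))/mem_ord_seq. Qed.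

Local Notation vtx k := (@Ordinal 7 k isT).
Local Notation col k := (@Ordinal 4 k isT).

Definition moser_spindle : rel 'I_7 := rel_of_edges
  [:: (0, 1); (0, 2); (1, 2); (1, 3); (2, 3);
      (0, 4); (0, 5); (4, 5); (4, 6); (5, 6); (3, 6)].

Definition moser_spindle_coloring (x : 'I_7) : 'I_4 :=
  nth (col 0) [:: col 0; col 1; col 2; col 0; col 1; col 2; col 3] x.

Lemma moser_spindle_chromatic : chromatic_number_eq moser_spindle 4.
Proof.
split.
  by exists moser_spindle_coloring; apply: proper_coloring_ord_seq; vm_compute.
move=> j j4 [c c_ok]; have j3 : j <= 3 by lia.
have c03 : c (vtx 0) = c (vtx 3).
  by apply: (diamond_same_color (y := vtx 1) (z := vtx 2)) j3 c_ok _ _ _ _ _.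
have c06 : c (vtx 0) = c (vtx 6).
  by apply: (diamond_same_color (y := vtx 4) (z := vtx 5)) j3 c_ok _ _ _ _ _.
by have := c_ok (vtx 3) (vtx 6) isT; rewrite -c03 -c06 eqxx.
Qed.

(* Two copies of the chain 0 - {2,3} - {4,5} - {6,7} - 1, in which consecutive
   parts are completely joined and 2 3, 6 7 are edges, glued at 0 and 1. *)
Definition chain_edges (k : nat) : seq (nat * nat) :=
  [:: (0, 2+k); (0, 3+k); (2+k, 3+k); (2+k, 4+k); (2+k, 5+k); (3+k, 4+k);
      (3+k, 5+k); (4+k, 6+k); (4+k, 7+k); (5+k, 6+k); (5+k, 7+k); (6+k, 7+k);
      (6+k, 1); (7+k, 1)].

Definition double_chain : rel 'I_14 := rel_of_edges (chain_edges 0 ++ chain_edges 6).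

Lemma double_chain_min_degree : min_degree_eq double_chain 4.
Proof.
split; last by exists ord0; rewrite degree_ord_seq; vm_compute.
move=> v; rewrite degree_ord_seq; move: v.
apply: (all_ord_seq (p := fun v => 4 <= count (double_chain v) (ord_seq 14))).
by vm_compute.
Qed.

Theorem mainTheorem4 :
  (exists (T : finType) (e : rel T),
      [/\ simple_graph e, fragile e & min_degree_eq e 4]) /\
  (exists (T : finType) (e : rel T),
      [/\ simple_graph e, fragile e & chromatic_number_eq e 4]).
Proof.
split.
  exists 'I_14, double_chain; split; last exact: double_chain_min_degree.
    by apply: rel_of_edges_simple; vm_compute.
  by apply: (no3conn_fragile (fuel := 14) (@mem_ord_seq 14)); vm_compute.
exists 'I_7, moser_spindle; split; last exact: moser_spindle_chromatic.
  by apply: rel_of_edges_simple; vm_compute.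
by apply: (no3conn_fragile (fuel := 7) (@mem_ord_seq 7)); vm_compute.
Qed.
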